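(* Let $i_n^B$ and $i_n^D$ denote the numbers of involutions (elements $w$ with $w^2=e$) in $B_n$ and $D_n$ respectively. Then \[2i_n^D-i_n^B=\begin{cases}0 & n\text{ odd},\\ 2^{n/2}(n-1)!!=\dfrac{n!}{(n/2)!} & n\text{ even}.\end{cases}\] Therefore, for all positive integers $n$, $i_n^D\le i_n^B\le 2i_n^D$.
   Context: $B_n$ is the group of permutations $w$ of $\{\pm1,\dots,\pm n\}$ with $w(-i)=-w(i)$ for all $i$, and $D_n=\{w\in B_n:w(1)w(2)\cdots w(n)>0\}$. $(n-1)!!=(n-1)(n-3)\cdots1$ for $n$ even. *)

From mathcomp Require Import all_boot all_order all_algebra all_fingroup.
Set Implicit Arguments. Unset Strict Implicit. Unset Printing Implicit Defensive.
Import GRing.Theory Num.Theory.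

(* The set {+-1,...,+-n} is encoded as 'I_n * bool:
   (i, false) stands for i+1 and (i, true) stands for -(i+1). *)
Definition sgn_elt (n : nat) := ('I_n * bool)%type.

Definition negs n (x : sgn_elt n) : sgn_elt n := (x.1, ~~ x.2).

Definition zval n (x : sgn_elt n) : int :=
  (if x.2 then - (x.1.+1 : nat)%:Z else (x.1.+1 : nat)%:Z)%R.

Definition inB n (w : {perm sgn_elt n}) : bool :=
  [forall x, w (negs x) == negs (w x)].

Definition inD n (w : {perm sgn_elt n}) : bool :=
  inB w && (0 < \prod_(i < n) zval (w (i, false)))%R.

Definition involution n (w : {perm sgn_elt n}) : bool := (w * w == 1)%g.

Definition iB (n : nat) : nat := #|[set w : {perm sgn_elt n} | inB w && involution w]|.
Definition iD (n : nat) : nat := #|[set w : {perm sgn_elt n} | inD w && involution w]|.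

Fixpoint dfact (n : nat) : nat :=
  match n with
  | 0 => 1
  | 1 => 1
  | (k.+2) as m => m * dfact k
  end.

(* Write eps(w) = +-1 for the sign of w(1)...w(n); then 2 i_n^D - i_n^B is the
   sum of eps over the involutions of B_n.  More generally let S(A) be this sum
   over the involutions moving only the letters +-i, i in A.  Fix a in A and
   sort the involutions by y = w(a): composing with the signed transposition
   sending a to y (and -a to -y) maps those with w(a) = y bijectively onto the
   involutions supported on A \ {a, |y|}, multiplying eps by -1 exactly when
   y = -a.  So the terms y = a and y = -a cancel, and each of the 2(|A|-1)
   other choices contributes S(A \ {a, |y|}); hence S depends only on m = |A|
   and S(m+1) = 2m S(m-1), which is solved by 0 for odd m and 2^(m/2) (m-1)!!
   for even m.  Nonnegativity of S then gives i^B <= 2 i^D. *)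

From mathcomp Require Import all_boot all_order all_algebra all_fingroup.
From mathcomp Require Import zify ring.
Set Implicit Arguments. Unset Strict Implicit. Unset Printing Implicit Defensive.
Import GRing.Theory Num.Theory.

Lemma dfactS m : dfact m.+1 = m.+1 * dfact m.-1.
Proof. by case: m => [|m] //=; rewrite muln1. Qed.

Definition signed_matchings m := if odd m then 0 else 2 ^ m./2 * dfact m.-1.

Lemma signed_matchingsS m : signed_matchings m.+1 = (m * signed_matchings m.-1).*2.
Proof.
case: m => [|m] //; rewrite /signed_matchings !oddS negbK.
case: (odd m); first by rewrite muln0.
by rewrite -[(m.+2)./2]/(m./2).+1 -[(m.+2).-1]/(m.+1) dfactS expnS -mul2n; ring.
Qed.

Lemma fact_double m : (m.*2)`! = 2 ^ m * dfact (m.*2).-1 * m`!.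
Proof.
elim: m => [|m IH] //; rewrite doubleS !factS IH.
by rewrite -[(m.*2.+2).-1]/(m.*2).+1 dfactS expnS -!mul2n; ring.
Qed.

Lemma signed_matchings_fact m : ~~ odd m -> 2 ^ m./2 * dfact m.-1 = m`! %/ (m./2)`!.
Proof.
move=> ev; have e : m = (m./2).*2 by rewrite -[LHS]odd_double_half (negbTE ev).
by rewrite {3}e fact_double -e mulnK // fact_gt0.
Qed.

Section SignedInvolutions.
Variable n : nat.
Implicit Types (a b : 'I_n) (x y : sgn_elt n) (s t u w : {perm sgn_elt n}).
Implicit Types (A C D : {set 'I_n}).

Definition pos a : sgn_elt n := (a, false).

Lemma negsK : involutive (@negs n).
Proof. by case=> i c; rewrite /negs negbK. Qed.

Lemma inBP w : reflect (forall x, w (negs x) = negs (w x)) (inB w).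
Proof. by apply: (iffP forallP) => wN x; [apply/eqP | rewrite wN]. Qed.

Lemma involutionP w : reflect (involutive w) (involution w).
Proof.
apply: (iffP eqP) => [ww1 x | wK]; first by rewrite -permM ww1 perm1.
by apply/permP => x; rewrite permM wK perm1.
Qed.

Lemma inBM s t : inB s -> inB t -> inB (s * t)%g.
Proof. by move=> /inBP sN /inBP tN; apply/inBP => x; rewrite !permM sN tN. Qed.

Lemma involutionM s t :
  commute s t -> involution s -> involution t -> involution (s * t)%g.
Proof.
move=> cst /eqP ss1 /eqP tt1; apply/eqP.
by rewrite {1}cst -mulgA (mulgA s) ss1 mul1g tt1.
Qed.

Definition blocks C : {set sgn_elt n} := [set x | x.1 \in C].

Lemma blocksS C D : C \subset D -> blocks C \subset blocks D.
Proof. by move=> /subsetP CD; apply/subsetP => x; rewrite !inE => /CD. Qed.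

Lemma disjoint_blocks C D : [disjoint C & D] -> [disjoint blocks C & blocks D].
Proof.
rewrite !disjoints_subset => /subsetP CD.
by apply/subsetP => x; rewrite !inE => /CD; rewrite inE.
Qed.

Lemma negs_neq x : negs x != x.
Proof. by case: x => i c; rewrite /negs xpair_eqE eqxx; case: c. Qed.

Lemma tperm_negs x y z : tperm x y (negs z) = negs (tperm (negs x) (negs y) z).
Proof. by rewrite (inj_tperm _ _ _ (can_inj negsK)) !negsK. Qed.

(* For y = -x the product of the two transpositions would be the identity. *)
Definition stperm x y : {perm sgn_elt n} :=
  if y == negs x then tperm x y else (tperm x y * tperm (negs x) (negs y))%g.

Lemma stpermL x y : stperm x y x = y.
Proof.
rewrite /stperm; case: eqP => [_|/eqP yNx]; first exact: tpermL.
rewrite permM tpermL tpermD ?negs_neq //.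
by apply: contraNneq yNx => ->.
Qed.

Lemma stperm_on x y : perm_on (blocks [set x.1; y.1]) (stperm x y).
Proof.
have onB (p q : sgn_elt n) : perm_on (blocks [set p.1; q.1]) (tperm p q).
  apply: subset_trans (tperm_on p q) _; apply/subsetP => z.
  by rewrite !inE => /orP[] /eqP->; rewrite eqxx ?orbT.
rewrite /stperm; case: ifP => _; first exact: onB.
exact: perm_onM (onB x y) (onB (negs x) (negs y)).
Qed.

Lemma tperm_negs_commute x y : y != negs x ->
  commute (tperm x y) (tperm (negs x) (negs y)).
Proof.
move=> yNx; apply: perm_onC (tperm_on _ _) (tperm_on _ _) _.
rewrite disjoints_subset; apply/subsetP => z; rewrite !inE.
case/orP => /eqP->; rewrite negb_or; apply/andP; split.
- by rewrite eq_sym negs_neq.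
- by rewrite -{1}(negsK x) (inj_eq (can_inj negsK)) eq_sym.
- by [].
- by rewrite eq_sym negs_neq.
Qed.

Lemma stperm_inB x y : inB (stperm x y).
Proof.
apply/inBP => z; rewrite /stperm; case: eqP => [->|/eqP yNx].
  by rewrite tperm_negs negsK tpermC.
rewrite {1}(tperm_negs_commute yNx) !permM.
by rewrite [in LHS]tperm_negs !negsK [in LHS]tperm_negs.
Qed.

Lemma stperm_involution x y : involution (stperm x y).
Proof.
rewrite /stperm; case: eqP => [_|/eqP yNx]; first by rewrite /involution tperm2.
by apply: involutionM (tperm_negs_commute yNx) _ _; rewrite /involution tperm2.
Qed.

Lemma sinvol_partner a t : inB t -> involution t ->
  t (pos (t (pos a)).1) = (a, (t (pos a)).2).
Proof.
move=> /inBP tN /involutionP tK; case ta: (t (pos a)) => [b c] /=.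
case: c ta => ta; last by rewrite /pos -ta tK.
by rewrite -[pos b]/(negs (b, true)) -ta tN tK.
Qed.

Lemma sinvol_agree a s t : inB s -> involution s -> inB t -> involution t ->
  s (pos a) = t (pos a) -> {in blocks [set a; (s (pos a)).1], s =1 t}.
Proof.
move=> /inBP sN /involutionP sK /inBP tN /involutionP tK sta [i c].
rewrite !inE /= => /orP[] /eqP->.
  by case: c; rewrite -?[(a, true)]/(negs (pos a)) ?sN ?tN sta.
have sy : s (s (pos a)) = t (s (pos a)) by rewrite sK sta tK.
case: (s (pos a)) sy => b d /= sy; case: (eqVneq c d) => [-> //|ncd].
have -> : c = ~~ d by move: ncd; case: c; case: (d).
by rewrite -[(b, ~~ d)]/(negs (b, d)) sN tN sy.
Qed.

Definition sinvol C := [set w | [&& inB w, involution w & perm_on (blocks C) w]].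

Local Open Scope ring_scope.

Definition sign w : int := \prod_(i < n) (-1) ^+ (w (pos i)).2.

Definition sign_sum C : int := \sum_(w in sinvol C) sign w.

Lemma sign1 : sign 1 = 1.
Proof. by apply: big1 => i _; rewrite perm1. Qed.

Lemma sign_on C t : perm_on (blocks C) t -> sign t = \prod_(i in C) (-1) ^+ (t (pos i)).2.
Proof.
move=> tC; rewrite /sign (bigID (mem C)) /= [X in _ * X]big1 ?mulr1 // => i iC.
by rewrite (out_perm tC) // inE.
Qed.

Lemma sign_mul C D t u : [disjoint C & D] ->
  perm_on (blocks C) t -> perm_on (blocks D) u -> sign (t * u)%g = sign t * sign u.
Proof.
move=> CD tC uD; rewrite /sign -big_split; apply: eq_bigr => i _ /=; rewrite permM.
have [iC | iC] := boolP (i \in C); last by rewrite (out_perm tC) ?inE // mul1r.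
have DF := disjointFr (disjoint_blocks CD).
rewrite [u (pos i)](out_perm uD) ?DF ?inE // mulr1.
by rewrite (out_perm uD) ?DF ?perm_closed ?inE.
Qed.

Lemma stperm_sinvol a y : stperm (pos a) y \in sinvol [set a; y.1].
Proof. by rewrite inE stperm_inB stperm_involution (stperm_on (pos a)). Qed.

Lemma sign_stperm a y : sign (stperm (pos a) y) = if y == negs (pos a) then -1 else 1.
Proof.
have := stperm_sinvol a y; rewrite inE => /and3P[tB tI tS]; rewrite (sign_on tS).
have [ya | nya] := eqVneq y.1 a.
  rewrite ya setUid big_set1 stpermL; case: (y) ya => b [] /= ->.
    by rewrite eqxx.
  by rewrite /negs /= xpair_eqE eqxx.
rewrite big_setU1 /= ?big_set1; last by rewrite inE eq_sym.
have := sinvol_partner a tB tI; rewrite stpermL => ->.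
rewrite /= -signr_addb addbb ifF //.
by apply: contraNF nya => /eqP->.
Qed.

Lemma sinvol_fiber A a y : a \in A -> y.1 \in A ->
  [set w in sinvol A | w (pos a) == y] =
  [set (stperm (pos a) y * u)%g | u in sinvol (A :\: [set a; y.1])].
Proof.
set S := [set a; y.1]; set t := stperm (pos a) y => aA yA.
have SA : S \subset A by apply/subsetP => i; rewrite !inE => /orP[]/eqP->.
have SD : [disjoint S & A :\: S] by rewrite disjoints_subset setCD subsetUr.
have := stperm_sinvol a y; rewrite inE -/S -/t => /and3P[tB tI tS].
have tA : perm_on (blocks A) t := subset_trans tS (blocksS SA).
have tu u : perm_on (blocks (A :\: S)) u -> commute t u.
  by move=> uD; apply: perm_onC tS uD (disjoint_blocks SD).
apply/setP => w; rewrite inE; apply/andP/imsetP.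
- rewrite inE => -[/and3P[wB wI wA] /eqP wa].
  have tw : {in blocks S, w =1 t}.
    by rewrite /S -wa; apply: sinvol_agree; rewrite // wa stpermL.
  have uS x : x \in blocks S -> (t * w)%g x = x.
    by move=> xS; rewrite permM tw ?perm_closed // (involutionP _ tI).
  have uD : perm_on (blocks (A :\: S)) (t * w)%g.
    apply/subsetP => x xu; have := subsetP (perm_onM tA wA) x xu.
    rewrite !inE => ->; rewrite andbT; apply: contraNN xu => xS.
    by rewrite uS ?inE.
  have wtu : w = (t * (t * w))%g by rewrite mulgA (eqP tI) mul1g.
  exists (t * w)%g; rewrite // inE inBM // uD andbT.
  apply: involutionM tI wI; rewrite wtu.
  by apply: commuteM; [exact: commute_refl | exact: tu].
- case=> u; rewrite inE => /and3P[uB uI uD] ->; split.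
  + rewrite inE inBM // (involutionM (tu u uD)) //=.
    by apply: perm_onM tA (subset_trans uD (blocksS (subsetDl A S))).
  + rewrite permM stpermL (out_perm uD) // !inE negb_and negbK.
    by rewrite eqxx orbT.
Qed.

Lemma sign_sum_fiber A a y : a \in A ->
  \sum_(w in sinvol A | w (pos a) == y) sign w =
  if y.1 \in A then sign (stperm (pos a) y) * sign_sum (A :\: [set a; y.1]) else 0.
Proof.
move=> aA; case: ifP => yA; last first.
  apply: big1 => w /andP[]; rewrite inE => /and3P[_ _ wA] /eqP wa.
  by have := perm_closed (pos a) wA; rewrite wa !inE yA aA.
rewrite (eq_bigl (mem [set w in sinvol A | w (pos a) == y])) => [|w]; last first.
  by rewrite !inE.
rewrite sinvol_fiber // big_imset /=; last by move=> u v _ _; apply: mulgI.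
rewrite mulr_sumr; apply: eq_bigr => u; rewrite inE => /and3P[_ _ uD].
apply: sign_mul (stperm_on (pos a) y) uD.
by rewrite disjoints_subset setCD subsetUr.
Qed.

Lemma sign_sum_rec A a : a \in A ->
  sign_sum A = \sum_(b in A :\ a) sign_sum (A :\: [set a; b]) *+ 2.
Proof.
move=> aA; rewrite {1}/sign_sum (partition_big (fun w => w (pos a)) xpredT) //=.
under eq_bigr => y _ do rewrite sign_sum_fiber //.
have pairE (F : sgn_elt n -> int) : \sum_y F y = \sum_b \sum_c F (b, c).
  by rewrite pair_bigA; apply: eq_bigr => -[].
rewrite pairE [RHS]big_mkcond /=; apply: eq_bigr => b _; rewrite big_bool !sign_stperm /=.
rewrite !inE /negs /= !xpair_eqE; have [-> | nba] := eqVneq b a.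
  by rewrite eqxx aA mulN1r mul1r addNr.
by rewrite andbF andbT; case: (b \in A); rewrite ?mul1r ?addr0 ?mulr2n.
Qed.

Lemma sign_sum0 : sign_sum set0 = 1.
Proof.
rewrite /sign_sum (_ : sinvol set0 = [set 1%g]) ?big_set1 ?sign1 //.
apply/setP => w; rewrite !inE; apply/and3P/eqP => [[_ _ w0] | ->].
  by apply/permP => x; rewrite perm1 (out_perm w0) // !inE.
by rewrite /involution mulg1 perm_on1; split => //; apply/inBP => x; rewrite !perm1.
Qed.

Lemma card_setD2 A a b : a \in A -> b \in A :\ a -> #|A :\: [set a; b]| = #|A|.-2.
Proof. by move=> aA bA; rewrite -setDDl (cardsD1 a A) aA (cardsD1 b (A :\ a)) bA. Qed.

Lemma sign_sum_card A : sign_sum A = (signed_matchings #|A|)%:Z.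
Proof.
have [k] := ubnP #|A|; elim: k A => // k IH A; rewrite ltnS => leAk.
have [-> | [a aA]] := set_0Vmem A; first by rewrite sign_sum0 cards0.
have cardA : #|A| = #|A :\ a|.+1 by rewrite (cardsD1 a A) aA.
have IHA b : b \in A :\ a ->
    sign_sum (A :\: [set a; b]) = (signed_matchings #|A :\ a|.-1)%:Z.
  move=> bA; rewrite IH (card_setD2 aA bA) ?cardA //.
  by move: leAk; rewrite cardA; lia.
rewrite (sign_sum_rec aA); under eq_bigr => b bA do rewrite IHA //.
rewrite sumr_const -mulrnA -natz -mulrnA natz cardA signed_matchingsS.
by rewrite mulnC -mulnA mul2n.
Qed.

Lemma sign_inB w : inB w -> sign w = if inD w then 1 else -1.
Proof.
have zvalE x : zval x = (-1) ^+ x.2 * (x.1.+1)%:Z.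
  by case: x => i []; rewrite /zval ?mulN1r ?mul1r.
move=> wB; rewrite /inD wB (eq_bigr _ (fun i _ => zvalE _)) big_split /=.
rewrite -/(sign w) pmulr_lgt0; last by apply: prodr_gt0.
by rewrite /sign prodrXr -signr_odd; case: odd.
Qed.

Lemma sign_sum_setT : sign_sum setT = (2 * iD n)%:Z - (iB n)%:Z.
Proof.
pose X := [set w : {perm sgn_elt n} | inD w && involution w].
pose Y := [set w : {perm sgn_elt n} | inB w && involution w].
have XY : X \subset Y by apply/subsetP => w; rewrite !inE => /andP[/andP[-> _] ->].
have sinvT : sinvol setT = Y.
  apply/setP => w; rewrite !inE (_ : perm_on _ w) ?andbT //.
  by apply/subsetP => x; rewrite !inE.
rewrite /sign_sum sinvT (big_setID X) (setIidPr XY) /=.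
rewrite (eq_bigr (fun=> 1)) => [|w]; last first.
  by rewrite inE => /andP[wD _]; rewrite sign_inB ?ifT //; case/andP: wD.
rewrite [X in _ + X](eq_bigr (fun=> -1)) => [|w]; last first.
  by rewrite !inE => /andP[wX /andP[wB wI]]; rewrite sign_inB // ifN // -(andbT (inD w)) -wI.
rewrite !sumr_const cardsD (setIidPr XY) /iD /iB -/X -/Y mulNrn.
by rewrite (natrB _ (subset_leq_card XY)) !natz; lia.
Qed.

End SignedInvolutions.

Theorem lemma5p13 (n : nat) (hn : 0 < n) :
  ((2 * iD n)%:Z - (iB n)%:Z =
     if odd n then 0 else (2 ^ n./2 * dfact n.-1)%:Z)%R
  /\ (~~ odd n -> 2 ^ n./2 * dfact n.-1 = n`! %/ (n./2)`!)
  /\ (iD n <= iB n <= 2 * iD n).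
Proof.
have excess : ((2 * iD n)%:Z - (iB n)%:Z = (signed_matchings n)%:Z)%R.
  by rewrite -sign_sum_setT sign_sum_card cardsT card_ord.
split; first by rewrite excess /signed_matchings; case: odd.
split; first exact: signed_matchings_fact.
have -> /= : iD n <= iB n.
  by apply/subset_leq_card/subsetP => w; rewrite !inE => /andP[/andP[-> _] ->].
by rewrite -lez_nat -subr_ge0 excess.
Qed.
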